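(* Let $X$ be a locally compact Hausdorff totally disconnected topological space, $G$ a discrete group, $K$ a field, and $\phi=(\phi_g,X_g,X)_{g\in G}$ a partial action of $G$ on $X$ with every $X_g$ clopen. Then $V\mapsto A_K(\mathcal{G}_V)$ is a bijection between the open invariant subsets $V$ of $X$ and the graded ideals of the Steinberg algebra $A_K(\mathcal{G}_X)$.
   Context: A partial action of $G$ (identity $\varepsilon$) on a topological space $X$ is $(\phi_g,X_g,X)_{g\in G}$ with $X_g$ open, homeomorphisms $\phi_g:X_{g^{-1}}\to X_g$, and (i) $X_\varepsilon=X$, $\phi_\varepsilon=\operatorname{id}$; (ii) $\phi_g(X_{g^{-1}}\cap X_h)=X_g\cap X_{gh}$; (iii) $\phi_g\phi_h(x)=\phi_{gh}(x)$ for $x\in X_{h^{-1}}\cap X_{h^{-1}g^{-1}}$. $V\subseteq X$ is invariant if $\phi_{g^{-1}}(X_g\cap V)\subseteq X_{g^{-1}}\cap V$ for all $g$. The groupoid $\mathcal{G}_X=\bigcup_g\{g\}\times X_g\subseteq G\times X$ (product topology) has range $r(g,x)=x$, domain $d(g,x)=\phi_{g^{-1}}(x)$, composition $(g,x)(h,y)=(gh,x)$ if $y=\phi_{g^{-1}}(x)$, inverse $(g^{-1},\phi_{g^{-1}}(x))$, and is $G$-graded by $(g,x)\mapsto g$; for open invariant $V$, $\mathcal{G}_V=\bigcup_g\{g\}\times(V\cap X_g)$ is an open subgroupoid, and $A_K(\mathcal{G}_V)$ is identified with the functions in $A_K(\mathcal{G}_X)$ supported in $\mathcal{G}_V$. The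 Steinberg algebra $A_K(\mathcal{H})$ consists of compactly supported locally constant functions $\mathcal{H}\to K$ with convolution $(f*g)(\gamma)=\sum_{\alpha\beta=\gamma}f(\alpha)g(\beta)$, graded by supports in $\{g\}\times X_g$. *)

From HB Require Import structures.
From mathcomp Require Import all_boot all_algebra.
From Stdlib Require Import List ClassicalEpsilon.
Set Implicit Arguments. Unset Strict Implicit. Unset Printing Implicit Defensive.
Import GRing.Theory.
Local Open Scope ring_scope.

Record topology (T : Type) := Topology {
  open : (T -> Prop) -> Prop;
  open_setT : open (fun _ => True);
  open_I : forall A B, open A -> open B -> open (fun x => A x /\ B x);
  open_U : forall (I : Type) (F : I -> T -> Prop),
      (forall i, open (F i)) -> open (fun x => exists i, F i x) }.

Definition hausdorff T (t : topology T) : Prop :=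
  forall x y : T, x <> y -> exists U W, open t U /\ open t W /\ U x /\ W y /\
    forall z, ~ (U z /\ W z).

Definition compact T (t : topology T) (S : T -> Prop) : Prop :=
  forall (I : Type) (F : I -> T -> Prop), (forall i, open t (F i)) ->
    (forall x, S x -> exists i, F i x) ->
    exists s : list I, forall x, S x -> exists i, In i s /\ F i x.

Definition locally_compact T (t : topology T) : Prop :=
  forall x : T, exists U C, open t U /\ U x /\ compact t C /\ (forall y, U y -> C y).

Definition connected T (t : topology T) (S : T -> Prop) : Prop :=
  ~ exists U W, open t U /\ open t W /\ (forall x, S x -> U x \/ W x) /\
      (exists x, S x /\ U x) /\ (exists x, S x /\ W x) /\
      (forall x, ~ (S x /\ U x /\ W x)).

Definition totally_disconnected T (t : topology T) : Prop :=
  forall S, connected t S -> forall x y, S x -> S y -> x = y.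

Definition clopen T (t : topology T) (A : T -> Prop) : Prop :=
  open t A /\ open t (fun x => ~ A x).

Definition discrete_top (T : Type) : topology T.
Proof. refine (@Topology T (fun _ => True) _ _ _); by []. Defined.

Definition prod_open A B (tA : topology A) (tB : topology B) (W : A * B -> Prop) :=
  forall p, W p -> exists U V, open tA U /\ open tB V /\ U p.1 /\ V p.2 /\
    forall q, U q.1 -> V q.2 -> W q.

Definition prod_top A B (tA : topology A) (tB : topology B) : topology (A * B).
Proof.
refine (@Topology _ (prod_open tA tB) _ _ _).
- move=> p _; exists (fun _ => True), (fun _ => True).
  by do !split; try apply: open_setT.
- move=> W1 W2 h1 h2 p [/h1 [U1 [V1 [oU1 [oV1 [u1 [v1 s1]]]]]]
                      /h2 [U2 [V2 [oU2 [oV2 [u2 [v2 s2]]]]]]].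
  exists (fun a => U1 a /\ U2 a), (fun b => V1 b /\ V2 b).
  do !split; try apply: open_I; try done.
  + by apply: s1; case: H; case: H0.
  + by apply: s2; case: H; case: H0.
- move=> I F hF p [i Fi]; have [U [V [oU [oV [u [v s]]]]]] := hF i p Fi.
  exists U, V; do !split => //; move=> q uq vq; exists i; exact: s.
Defined.

(* f : A -> B (defined on all of X) restricts to a homeomorphism from the
   subspace A onto the subspace B *)
Definition homeo_between X (t : topology X) (A B : X -> Prop) (f : X -> X) : Prop :=
  (forall x, A x -> B (f x)) /\
  (forall y, B y -> exists x, A x /\ f x = y) /\
  (forall x x', A x -> A x' -> f x = f x' -> x = x') /\
  (forall U, open t U -> exists W, open t W /\ forall x, A x -> (U (f x) <-> W x)) /\
  (forall W, open t W -> exists U, open t U /\ forall x, A x -> (W x <-> U (f x))).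

Record group_str (G : Type) := GroupStr {
  gmul : G -> G -> G;
  gone : G;
  ginv : G -> G;
  gmulA : forall a b c, gmul a (gmul b c) = gmul (gmul a b) c;
  gmul1g : forall a, gmul gone a = a;
  gmulg1 : forall a, gmul a gone = a;
  gmulVg : forall a, gmul (ginv a) a = gone;
  gmulgV : forall a, gmul a (ginv a) = gone }.

Record partial_action G (gs : group_str G) X (tX : topology X) := PartialAction {
  pdom : G -> X -> Prop;
  pact : G -> X -> X;                          (* phi_g, meaningful on X_{g^-1} *)
  pdom_open : forall g, open tX (pdom g);
  pact_homeo : forall g, homeo_between tX (pdom (ginv gs g)) (pdom g) (pact g);
  pdom_one : forall x, pdom (gone gs) x;
  pact_one : forall x, pact (gone gs) x = x;
  pdom_comp : forall g h y,
    (pdom g y /\ pdom (gmul gs g h) y) <->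
    (exists x, pdom (ginv gs g) x /\ pdom h x /\ pact g x = y);
  pact_comp : forall g h x, pdom (ginv gs h) x ->
    pdom (gmul gs (ginv gs h) (ginv gs g)) x ->
    pact g (pact h x) = pact (gmul gs g h) x }.

Definition pa_invariant G (gs : group_str G) X (tX : topology X)
    (pa : partial_action gs tX) (V : X -> Prop) : Prop :=
  forall g x, pdom pa g x -> V x ->
    pdom pa (ginv gs g) (pact pa (ginv gs g) x) /\ V (pact pa (ginv gs g) x).

(* ---------- Steinberg algebra A_K(G_X) ----------
   Elements of G_X = { (g,x) | x ∈ X_g } ⊆ G × X (product topology, G discrete).
   A function G_X -> K is represented as f : G -> X -> K vanishing off G_X. *)
Section Steinberg.
Variables (G : Type) (gs : group_str G) (X : Type) (tX : topology X)
  (pa : partial_action gs tX) (K : fieldType).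

Definition GXtop : topology (G * X) := prod_top (discrete_top G) tX.
Definition GX (p : G * X) : Prop := pdom pa p.1 p.2.

Definition supp (f : G -> X -> K) (p : G * X) : Prop :=
  GX p /\ forall W, open GXtop W -> W p -> exists q, W q /\ GX q /\ f q.1 q.2 != 0.

Definition loc_const (f : G -> X -> K) : Prop :=
  forall p, GX p -> exists W, open GXtop W /\ W p /\
    forall q, W q -> GX q -> f q.1 q.2 = f p.1 p.2.

Definition steinberg (f : G -> X -> K) : Prop :=
  (forall g x, f g x != 0 -> pdom pa g x) /\ loc_const f /\ compact GXtop (supp f).

Definition fsum (F : G -> K) : K :=
  epsilon (inhabits 0) (fun v => exists s : list G, NoDup s /\
    (forall a, F a != 0 -> In a s) /\ v = \sum_(a <- s) F a).

(* convolution: (f*h)(c,x) = sum over (a,x)(a^-1 c, phi_{a^-1} x) = (c,x) *)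
Definition conv (f h : G -> X -> K) : G -> X -> K :=
  fun c x => fsum (fun a => f a x * h (gmul gs (ginv gs a) c) (pact pa (ginv gs a) x)).

Definition ideal (I : (G -> X -> K) -> Prop) : Prop :=
  (forall f, I f -> steinberg f) /\
  I (fun _ _ => 0) /\
  (forall f h, I f -> I h -> I (fun g x => f g x - h g x)) /\
  (forall f h, steinberg f -> I h -> I (conv f h) /\ I (conv h f)).

(* graded: the homogeneous component f_g of every f ∈ I lies in I *)
Definition graded_ideal (I : (G -> X -> K) -> Prop) : Prop :=
  ideal I /\
  forall f g h, I f ->
    (forall c x, (c = g /\ h c x = f c x) \/ (c <> g /\ h c x = 0)) -> I h.

(* A_K(G_V) as the functions of A_K(G_X) supported in G_V *)
Definition steinberg_on (V : X -> Prop) (f : G -> X -> K) : Prop :=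
  steinberg f /\ forall g x, f g x != 0 -> V x.

End Steinberg.

(* A graded ideal I of A_K(G_X) is determined by the open set V of points x at which
   some f in I satisfies f(c, x) <> 0.  Since X is locally compact, Hausdorff and totally
   disconnected, it has a basis of compact open sets (every point is its own
   quasi-component inside a compact neighbourhood).  Convolving an f in I with a
   characteristic function of a compact open bisection and taking the homogeneous
   component of degree 1 (I is graded) produces 1_U in I for a compact open neighbourhood
   U of x in V; finitely many of these cover the support of any f supported in G_V, their
   union U' again has 1_U' in I, and f = 1_U' * f lies in I.  Conversely A_K(G_V) is a
   graded ideal as soon as V is invariant, and distinct open V are told apart by the
   functions 1_U with U compact open. *)

From mathcomp Require Import all_boot all_algebra.
From Stdlib Require Import Classical ClassicalEpsilon.
From Stdlib Require Import FunctionalExtensionality PropExtensionality.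
From Stdlib Require Permutation.
Set Implicit Arguments. Unset Strict Implicit. Unset Printing Implicit Defensive.

Lemma not_all_imply_ex (A : Type) (P Q : A -> Prop) :
  ~ (forall a, P a -> Q a) -> exists2 a, P a & ~ Q a.
Proof.
move=> /not_all_ex_not [a nPQ].
by exists a; [apply: NNPP => nPa; apply: nPQ | move=> Qa; apply: nPQ].
Qed.

Definition closed T (t : topology T) (A : T -> Prop) : Prop := open t (fun x => ~ A x).

Section Topology.
Variables (T : Type) (t : topology T).

Lemma open_ext (A B : T -> Prop) : (forall x, A x <-> B x) -> open t A -> open t B.
Proof.
move=> AB oA; suff -> : B = A by [].
apply: functional_extensionality => x.
exact: propositional_extensionality (iff_sym (AB x)).
Qed.

Lemma open_of_nbhd (S : T -> Prop) :
  (forall x, S x -> exists U, open t U /\ U x /\ forall y, U y -> S y) -> open t S.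
Proof.
move=> nbhdS.
pose I := {U : T -> Prop | open t U /\ forall y, U y -> S y}.
apply: open_ext (@open_U _ t I (@proj1_sig _ _) (fun i => proj1 (proj2_sig i))) => x.
split; first by case=> -[U [_ US]] /= /US.
by move=> /nbhdS [U [oU [Ux US]]]; exists (exist _ U (conj oU US)).
Qed.

Lemma open_or (A B : T -> Prop) : open t A -> open t B -> open t (fun x => A x \/ B x).
Proof.
move=> oA oB; apply: open_of_nbhd => x [Ax|Bx].
- by exists A; split => //; split => // y; left.
- by exists B; split => //; split => // y; right.
Qed.

Lemma open_listI (A : Type) (s : list A) (F : A -> T -> Prop) :
  (forall a, List.In a s -> open t (F a)) ->
  open t (fun x => forall a, List.In a s -> F a x).
Proof.
elim: s => [|a s IH] oF.
  by apply: open_ext (open_setT t) => x; split => // _ a [].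
apply: open_ext (open_I (oF a (or_introl erefl)) (IH (fun b bs => oF b (or_intror bs)))).
move=> x /=; split; first by case=> Fa Fs b [<-|/Fs].
by move=> Fx; split=> [|b bs]; apply: Fx; [left|right].
Qed.

Lemma open_listU (A : Type) (s : list A) (F : A -> T -> Prop) :
  (forall a, open t (F a)) -> open t (fun x => exists a, List.In a s /\ F a x).
Proof.
move=> oF; apply: open_of_nbhd => x [a [sa Fa]].
by exists (F a); split => //; split => // y; exists a.
Qed.

Lemma open_nbhd_list (A : Type) (s : list A) (P : A -> T -> Prop) (x : T) :
  (forall a, exists N, open t N /\ N x /\ forall y, N y -> P a y) ->
  exists N, open t N /\ N x /\ forall a y, List.In a s -> N y -> P a y.
Proof.
move=> nbhdP; elim: s => [|a s [N [oN [Nx NP]]]].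
  by exists (fun _ => True); split; [apply: open_setT | split].
have [M [oM [Mx MP]]] := nbhdP a.
exists (fun y => M y /\ N y); split; first exact: open_I.
by split => // b y [<- | sb] [My Ny]; [apply: MP | apply: NP].
Qed.

Lemma compact_ext (A B : T -> Prop) : (forall x, A x <-> B x) -> compact t A -> compact t B.
Proof.
move=> AB cA I F oF covB; have [s hs] := cA I F oF (fun x Ax => covB x (proj1 (AB x) Ax)).
by exists s => x /AB /hs.
Qed.

Lemma compact_empty : compact t (fun _ => False).
Proof. by move=> I F _ _; exists nil. Qed.

Lemma compact_or (A B : T -> Prop) : compact t A -> compact t B ->
  compact t (fun x => A x \/ B x).
Proof.
move=> cA cB I F oF cov.
have [s1 h1] := cA I F oF (fun x Ax => cov x (or_introl Ax)).
have [s2 h2] := cB I F oF (fun x Bx => cov x (or_intror Bx)).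
by exists (s1 ++ s2)%list => x [/h1|/h2] [i [si Fi]]; exists i;
  split => //; apply: List.in_or_app; tauto.
Qed.

Lemma compact_closedI (C D : T -> Prop) : compact t C -> closed t D ->
  compact t (fun x => C x /\ D x).
Proof.
move=> cC cD I F oF cov.
pose F' (o : option I) := if o is Some i then F i else fun x => ~ D x.
have [|s hs] := cC _ F' (fun o => if o is Some i then oF i else cD).
  move=> x Cx; case: (classic (D x)) => Dx; last by exists None.
  by have [i Fi] := cov x (conj Cx Dx); exists (Some i).
exists (List.flat_map (fun o => if o is Some i then [:: i] else [::]) s).
move=> x [/hs [[i|] [si Fi]] Dx] //.
by exists i; split => //; apply/List.in_flat_map; exists (Some i); split => //; left.
Qed.

Lemma compact_closed_subset (C S : T -> Prop) : compact t C -> (forall x, S x -> C x) ->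
  closed t S -> compact t S.
Proof.
move=> cC SC cS; apply: compact_ext (compact_closedI cC cS) => x.
by split=> [[]|Sx] //; split => //; apply: SC.
Qed.

Lemma closed_not (A : T -> Prop) : open t A -> closed t (fun x => ~ A x).
Proof. by move=> oA; apply: open_ext oA => x; split => [Ax /(_ Ax)|/NNPP]. Qed.

Hypothesis hH : hausdorff t.

Lemma separate_point_compact (x : T) (B : T -> Prop) : compact t B -> ~ B x ->
  exists U W, open t U /\ open t W /\ U x /\ (forall y, B y -> W y) /\
    forall z, ~ (U z /\ W z).
Proof.
move=> cB nBx.
pose P y (UW : (T -> Prop) * (T -> Prop)) := open t UW.1 /\ open t UW.2 /\
  UW.1 x /\ UW.2 y /\ forall z, ~ (UW.1 z /\ UW.2 z).
pose I := {y : T & {UW | P y UW}}.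
pose UW (i : I) := projT1 (projT2 i); pose hUW (i : I) := proj2_sig (projT2 i).
have [|s hs] := cB I (fun i => (UW i).2) (fun i => proj1 (proj2 (hUW i))).
  move=> y By; have [U [W h]] := hH (x := x) (y := y) (fun e => nBx (eq_ind_r B By e)).
  by exists (existT _ y (exist _ (U, W) h)); apply: (proj1 (proj2 (proj2 (proj2 h)))).
exists (fun z => forall i, List.In i s -> (UW i).1 z).
exists (fun z => exists i, List.In i s /\ (UW i).2 z).
split; first by apply: open_listI => i _; case: (hUW i).
split; first by apply: open_listU => i; case: (hUW i) => _ [].
split; first by move=> i _; case: (hUW i) => _ [_ []].
split => // z [Uz [i [si Wz]]].
by case: (hUW i) => _ [_ [_ [_ dUW]]]; apply: (dUW z); split => //; apply: Uz.
Qed.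

Lemma compact_closed (C : T -> Prop) : compact t C -> closed t C.
Proof.
move=> cC; apply: open_of_nbhd => x nCx.
have [U [W [oU [_ [Ux [CW dUW]]]]]] := separate_point_compact cC nCx.
by exists U; split => //; split => // y Uy Cy; apply: (dUW y); split => //; apply: CW.
Qed.

Lemma separate_compact (A B : T -> Prop) : compact t A -> compact t B ->
  (forall z, ~ (A z /\ B z)) ->
  exists U W, open t U /\ open t W /\ (forall y, A y -> U y) /\ (forall y, B y -> W y) /\
    forall z, ~ (U z /\ W z).
Proof.
move=> cA cB dAB.
pose P x (UW : (T -> Prop) * (T -> Prop)) := open t UW.1 /\ open t UW.2 /\
  UW.1 x /\ (forall y, B y -> UW.2 y) /\ forall z, ~ (UW.1 z /\ UW.2 z).
pose I := {x : T & {UW | P x UW}}.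
pose UW (i : I) := projT1 (projT2 i); pose hUW (i : I) := proj2_sig (projT2 i).
have [|s hs] := cA I (fun i => (UW i).1) (fun i => proj1 (hUW i)).
  move=> x Ax; have [U [W h]] := separate_point_compact cB (fun Bx => dAB x (conj Ax Bx)).
  by exists (existT _ x (exist _ (U, W) h)); apply: (proj1 (proj2 (proj2 h))).
exists (fun z => exists i, List.In i s /\ (UW i).1 z).
exists (fun z => forall i, List.In i s -> (UW i).2 z).
split; first by apply: open_listU => i; case: (hUW i).
split; first by apply: open_listI => i _; case: (hUW i) => _ [].
split => //; split; first by move=> y By i _; case: (hUW i) => _ [_ [_ [BW _]]]; apply: BW.
move=> z [[i [si Uz]] Wz].
by case: (hUW i) => _ [_ [_ [_ dUW]]]; apply: (dUW z); split => //; apply: Wz.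
Qed.

End Topology.

Section QuasiComponent.
Variables (T : Type) (t : topology T).
Hypothesis hH : hausdorff t.
Variables (C : T -> Prop) (x : T).
Hypotheses (cC : compact t C) (Cx : C x).

(* [P] is clopen in the subspace [C]; relative openness is encoded as openness of [P ∪ ∁C]. *)
Definition clopen_in (P : T -> Prop) : Prop :=
  (forall y, P y -> C y) /\ open t (fun y => P y \/ ~ C y) /\ closed t P.

Definition quasi_component (y : T) : Prop := forall P, clopen_in P /\ P x -> P y.

Lemma clopen_in_self : clopen_in C.
Proof.
split => //; split; last exact: compact_closed.
by apply: open_ext (open_setT t) => y; split => // _; apply: classic.
Qed.

Lemma clopen_in_listI (A : Type) (s : list A) (F : A -> T -> Prop) :
  (forall a, List.In a s -> clopen_in (F a)) ->
  clopen_in (fun y => C y /\ forall a, List.In a s -> F a y).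
Proof.
move=> cF; split; first by move=> y [].
split.
- apply: open_ext (open_listI (s := s) (F := fun a y => F a y \/ ~ C y) _); last first.
    by move=> a /cF [_ []].
  move=> y; case: (classic (C y)) => Cy; last by split => [_|_ a _]; right.
  split; last by case=> [[_ Fy] a /Fy|//]; left.
  by move=> Fy; left; split => // a /Fy [].
- apply: open_of_nbhd => y /not_and_or [nCy|].
  + exists (fun z => ~ C z); split; first exact: compact_closed.
    by split => // z nCz [].
  + move=> /not_all_imply_ex [a sa nFy].
    exists (fun z => ~ F a z); split; first by case: (cF a sa) => _ [].
    by split => // z nFz [_ /(_ a sa)].
Qed.

Lemma quasi_component_center : quasi_component x.
Proof. by move=> P []. Qed.

Lemma quasi_component_sub y : quasi_component y -> C y.
Proof. by move/(_ C (conj clopen_in_self Cx)). Qed.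

Lemma closed_quasi_component : closed t quasi_component.
Proof.
apply: open_of_nbhd => y /not_all_imply_ex [P [cP Px] nPy].
exists (fun z => ~ P z); split; first by case: cP => _ [].
by split => // z nPz /(_ P (conj cP Px)).
Qed.

Lemma compact_quasi_component : compact t quasi_component.
Proof. exact: compact_closed_subset cC quasi_component_sub closed_quasi_component. Qed.

Lemma clopen_in_separate (D : T -> Prop) : compact t D ->
  (forall y, D y -> ~ quasi_component y) ->
  exists P, clopen_in P /\ P x /\ forall y, D y -> ~ P y.
Proof.
move=> cD DQ; pose I := {P | clopen_in P /\ P x}.
have [|s hs] := cD I (fun i y => ~ sval i y) (fun i => (proj2_sig i).1.2.2).
  move=> y /DQ /not_all_imply_ex [P [cP Px] nPy].
  by exists (exist _ P (conj cP Px)).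
exists (fun y => C y /\ forall i, List.In i s -> sval i y).
split; first by apply: clopen_in_listI => i _; case: (proj2_sig i).
split; first by split => // i _; case: (proj2_sig i).
by move=> y /hs [i [si nPy]] [_ /(_ i si)].
Qed.

Lemma clopen_in_split (P Y Z : T -> Prop) : clopen_in P -> open t Y -> open t Z ->
  (forall z, ~ (Y z /\ Z z)) -> (forall y, P y -> Y y \/ Z y) ->
  clopen_in (fun y => P y /\ Y y).
Proof.
move=> [PC [oP cP]] oY oZ dYZ PYZ; split; first by move=> y [/PC].
split.
- apply: open_ext (open_I oP (open_or oY (compact_closed hH cC))) => y; tauto.
- apply: open_ext (open_or cP oZ) => y; split.
    by case=> [nPy [] //|Zy [_ Yy]]; apply: (dYZ y).
  move=> /not_and_or [nPy|nYy]; first by left.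
  by case: (classic (P y)) => [/PYZ [] //|]; [right | left].
Qed.

Lemma quasi_component_subset_open (Y Z : T -> Prop) : open t Y -> open t Z ->
  (forall z, ~ (Y z /\ Z z)) -> (forall y, quasi_component y -> Y y \/ Z y) -> Y x ->
  forall y, quasi_component y -> Y y.
Proof.
move=> oY oZ dYZ QYZ Yx.
have cD : compact t (fun y => C y /\ ~ (Y y \/ Z y)).
  exact: compact_closedI cC (closed_not (open_or oY oZ)).
have [|P [cP [Px PD]]] := clopen_in_separate cD.
  by move=> y [_ nYZ] /QYZ.
have PYZ y : P y -> Y y \/ Z y.
  by move=> Py; apply: NNPP => nYZ; apply: (PD y) => //; split => //; case: cP => /(_ y Py).
by move=> y /(_ _ (conj (clopen_in_split cP oY oZ dYZ PYZ) (conj Px Yx))) [].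
Qed.

Lemma connected_quasi_component : connected t quasi_component.
Proof.
move=> [U [W [oU [oW [QUW [[zU [QzU UzU]] [[zW [QzW WzW]] dUW]]]]]]].
have [|U' [W' [oU' [oW' [AU' [BW' dUW']]]]]] := separate_compact hH
  (compact_closedI compact_quasi_component (closed_not oW))
  (compact_closedI compact_quasi_component (closed_not oU)).
  by move=> z [[/QUW Qz nWz] [_ nUz]]; case: Qz.
have QUW' y : quasi_component y -> U' y \/ W' y.
  move=> Qy; case: (classic (W y)) => Wy; last by left; apply: AU'.
  by right; apply: BW'; split => // Uy; apply: (dUW y).
case: (QUW' x quasi_component_center) => [U'x|W'x].
- have U'zW := quasi_component_subset_open oU' oW' dUW' QUW' U'x QzW.
  by apply: (dUW' zW); split => //; apply: BW'; split => // UzW; apply: (dUW zW).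
- have W'zU := quasi_component_subset_open oW' oU' (fun z '(conj a b) => dUW' z (conj b a))
    (fun y Qy => proj1 (or_comm _ _) (QUW' y Qy)) W'x QzU.
  by apply: (dUW' zU); split => //; apply: AU'; split => // WzU; apply: (dUW zU).
Qed.

End QuasiComponent.

Lemma compact_clopen_nbhd (T : Type) (t : topology T) (x : T) (O : T -> Prop) :
  hausdorff t -> locally_compact t -> totally_disconnected t -> open t O -> O x ->
  exists U, compact t U /\ open t U /\ closed t U /\ U x /\ forall y, U y -> O y.
Proof.
move=> hH hLC hTD oO Ox; have [U0 [C [oU0 [U0x [cC U0C]]]]] := hLC x.
have Cx := U0C x U0x.
have Qx y : quasi_component t C x y -> y = x.
  move=> Qy; apply: hTD (connected_quasi_component hH cC Cx) _ _ Qy _.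
  exact: quasi_component_center.
have cD : compact t (fun y => C y /\ ~ (U0 y /\ O y)).
  exact: compact_closedI cC (closed_not (open_I oU0 oO)).
have [|P [[PC [oP cP]] [Px PD]]] := clopen_in_separate hH cC Cx cD.
  by move=> y [_ nUO] /Qx ey; apply: nUO; rewrite ey.
have PUO y : P y -> U0 y /\ O y.
  by move=> Py; apply: NNPP => nUO; apply: (PD y) => //; split => //; apply: PC.
exists P; split; first exact: compact_closed_subset cC PC cP.
split; last by do 2!split => //; move=> y /PUO [].
apply: open_ext (open_I oP oU0) => y; split; last first.
  by move=> Py; split; [left | case: (PUO y Py)].
by case=> [[//|nCy] /U0C].
Qed.

Section Group.
Variables (G : Type) (gs : group_str G).

Lemma ginv_uniq a b : gmul gs a b = gone gs -> ginv gs a = b.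
Proof. by move=> ab1; rewrite -(gmulg1 gs (ginv gs a)) -ab1 gmulA gmulVg gmul1g. Qed.

Lemma ginvK a : ginv gs (ginv gs a) = a.
Proof. by apply: ginv_uniq; rewrite gmulVg. Qed.

Lemma ginv1 : ginv gs (gone gs) = gone gs.
Proof. by apply: ginv_uniq; rewrite gmul1g. Qed.

Lemma gmulVK a b : gmul gs a (gmul gs (ginv gs a) b) = b.
Proof. by rewrite gmulA gmulgV gmul1g. Qed.

Lemma gmulV_inj a b c : gmul gs (ginv gs a) c = gmul gs (ginv gs b) c -> a = b.
Proof.
move=> e; have : gmul gs (gmul gs (ginv gs a) c) (ginv gs c) =
  gmul gs (gmul gs (ginv gs b) c) (ginv gs c) by rewrite e.
by rewrite -!gmulA !gmulgV !gmulg1 => ab; rewrite -[a]ginvK ab ginvK.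
Qed.

End Group.

Section PartialAction.
Variables (G : Type) (gs : group_str G) (X : Type) (tX : topology X)
  (pa : partial_action gs tX).

Lemma pdom_pact_inv g x : pdom pa g x -> pdom pa (ginv gs g) (pact pa (ginv gs g) x).
Proof.
by move=> gx; have [maps _] := pact_homeo pa (ginv gs g); apply: maps; rewrite ginvK.
Qed.

Lemma pact_invK g x : pdom pa g x -> pact pa g (pact pa (ginv gs g) x) = x.
Proof.
move=> gx; rewrite pact_comp ?gmulgV ?pact_one ?ginvK ?gmulgV //; exact: pdom_one.
Qed.

Lemma pact_inv_continuous g (U : X -> Prop) : open tX U ->
  exists W, open tX W /\ forall y, pdom pa g y -> (U (pact pa (ginv gs g) y) <-> W y).
Proof.
move=> oU; have [_ [_ [_ [cont _]]]] := pact_homeo pa (ginv gs g).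
have [W [oW hW]] := cont U oU; exists W; split => // y; rewrite -{1}(ginvK gs g); exact: hW.
Qed.

Lemma pdom_mulV a c x : pdom pa a x ->
  pdom pa (gmul gs (ginv gs a) c) (pact pa (ginv gs a) x) -> pdom pa c x.
Proof.
move=> ax cx; have [_ comp] := pdom_comp pa a (gmul gs (ginv gs a) c) x.
have [_] := comp (ex_intro _ _ (conj (pdom_pact_inv ax) (conj cx (pact_invK ax)))).
by rewrite gmulVK.
Qed.

Lemma open_GX_intro (W : G * X -> Prop) :
  (forall p, W p -> exists U, open tX U /\ U p.2 /\ forall y, U y -> W (p.1, y)) ->
  open (GXtop G tX) W.
Proof.
move=> nbhdW p Wp; have [U [oU [Up UW]]] := nbhdW p Wp.
by exists (fun c => c = p.1), U; do !split => //; case=> c y /= -> /UW.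
Qed.

Lemma open_GX_elim (W : G * X -> Prop) c x : open (GXtop G tX) W -> W (c, x) ->
  exists U, open tX U /\ U x /\ forall y, U y -> W (c, y).
Proof.
move=> oW Wp; have [A [U [_ [oU [Ac [Ux AUW]]]]]] := oW (c, x) Wp.
by exists U; split => //; split => // y Uy; apply: (AUW (c, y)).
Qed.

Lemma open_GX_slice (U : X -> Prop) c : open tX U ->
  open (GXtop G tX) (fun p => p.1 = c /\ U p.2).
Proof. by move=> oU; apply: open_GX_intro => -[d y] /= [-> Uy]; exists U. Qed.

Lemma open_GX_fst c : open (GXtop G tX) (fun p => p.1 = c).
Proof.
by apply: open_GX_intro => -[d y] /= ->; exists (fun _ => True); split => //; apply: open_setT.
Qed.

Lemma open_GX_snd (U : X -> Prop) : open tX U -> open (GXtop G tX) (fun p => U p.2).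
Proof. by move=> oU; apply: open_GX_intro => -[d y] /= Uy; exists U. Qed.

Lemma open_GX_section (W : G * X -> Prop) c : open (GXtop G tX) W ->
  open tX (fun y => W (c, y)).
Proof. by move=> oW; apply: open_of_nbhd => y /(open_GX_elim oW). Qed.

Lemma compact_GX_list (l : list G) (C : X -> Prop) : compact tX C ->
  compact (GXtop G tX) (fun p => List.In p.1 l /\ C p.2).
Proof.
move=> cC; elim: l => [|c l IH].
  by apply: compact_ext (@compact_empty _ _) => p; split => // -[].
have cc : compact (GXtop G tX) (fun p => p.1 = c /\ C p.2).
  move=> I F oF cov.
  have [s hs] := cC I (fun i y => F i (c, y)) (fun i => open_GX_section c (oF i))
    (fun y Cy => cov (c, y) (conj erefl Cy)).
  by exists s => -[d y] /= [-> /hs].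
apply: compact_ext (compact_or cc IH) => p /=; split.
- by case=> -[e Cp]; split => //; [left | right].
- by case=> -[e|i] Cp; [left | right].
Qed.

Lemma compact_GX_snd (S : G * X -> Prop) : compact (GXtop G tX) S ->
  compact tX (fun y => exists c, S (c, y)).
Proof.
move=> cS I F oF cov.
have [|s hs] := cS I (fun i p => F i p.2) (fun i => open_GX_snd (oF i)).
  by case=> c y Sp; apply: cov; exists c.
by exists s => y [c /(hs (c, y))].
Qed.

Hypothesis hclopen : forall g, clopen tX (pdom pa g).

Lemma closed_GX : closed (GXtop G tX) (GX pa).
Proof.
apply: open_GX_intro => -[d y] /= nGX; exists (fun z => ~ pdom pa d z).
by split => //; case: (hclopen d).
Qed.

End PartialAction.

Import GRing.Theory.
Local Open Scope ring_scope.

Section FiniteSums.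
Variables (G : Type) (K : fieldType).

Lemma big_Permutation (F : G -> K) (s1 s2 : list G) : Permutation.Permutation s1 s2 ->
  \sum_(a <- s1) F a = \sum_(a <- s2) F a.
Proof.
elim => [|x l l' _ IH|x y l|l l' l'' _ IH1 _ IH2]; rewrite ?big_cons ?IH //.
- by rewrite addrCA.
- by rewrite IH1.
Qed.

Lemma eq_big_In (F F' : G -> K) (s : list G) : (forall a, List.In a s -> F a = F' a) ->
  \sum_(a <- s) F a = \sum_(a <- s) F' a.
Proof.
elim: s => [|a s IH] FF'; first by rewrite !big_nil.
by rewrite !big_cons FF' ?IH //; [move=> b sb; apply: FF'; right | left].
Qed.

Lemma big_filter_neq0 (F : G -> K) (s : list G) :
  \sum_(a <- s) F a = \sum_(a <- List.filter (fun a => F a != 0) s) F a.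
Proof.
elim: s => [|a s IH] //=; rewrite big_cons IH.
by case: eqP => [->|_]; rewrite ?add0r ?big_cons.
Qed.

Lemma fsumE (F : G -> K) (s : list G) : List.NoDup s ->
  (forall a, F a != 0 -> List.In a s) -> fsum F = \sum_(a <- s) F a.
Proof.
move=> nds Fs; rewrite /fsum.
have ex : exists v, exists s : list G, List.NoDup s /\
    (forall a, F a != 0 -> List.In a s) /\ v = \sum_(a <- s) F a.
  by exists (\sum_(a <- s) F a), s.
have [s' [nds' [Fs' ->]]] := epsilon_spec (inhabits 0) _ ex.
rewrite (big_filter_neq0 F s) (big_filter_neq0 F s'); apply: big_Permutation.
apply: Permutation.NoDup_Permutation; try exact: List.NoDup_filter.
move=> a; rewrite !List.filter_In.
by split => -[_ Fa]; split => //; first [exact: Fs' Fa | exact: Fs Fa].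
Qed.

Lemma fsum1 (F : G -> K) a0 : (forall a, a <> a0 -> F a = 0) -> fsum F = F a0.
Proof.
move=> F0; rewrite (fsumE (s := [:: a0])).
- by rewrite big_cons big_nil addr0.
- by constructor; [by [] | constructor].
- move=> a Fa; left; apply: NNPP => ne; move: Fa; rewrite F0 ?eqxx // => e; exact: ne (esym e).
Qed.

Lemma fsum0 (F : G -> K) : (forall a, F a = 0) -> fsum F = 0.
Proof.
move=> F0; rewrite (fsumE (s := [::])) ?big_nil //; first by constructor.
by move=> a; rewrite F0 eqxx.
Qed.

Lemma fsum_neq0 (F : G -> K) : fsum F != 0 -> exists a, F a != 0.
Proof.
move=> nz; apply: NNPP => nF; move: nz; rewrite fsum0 ?eqxx // => a.
by apply: NNPP => Fa; apply: nF; exists a; apply/eqP.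
Qed.

End FiniteSums.

Lemma mulf_neq0_inv (K : fieldType) (x y : K) : x * y != 0 -> x != 0 /\ y != 0.
Proof. by rewrite mulf_eq0 negb_or => /andP. Qed.

Section SteinbergAlgebra.
Variables (G : Type) (gs : group_str G) (X : Type) (tX : topology X)
  (pa : partial_action gs tX) (K : fieldType).

Notation GXt := (GXtop G tX).

Definition vanish_off_GX (f : G -> X -> K) : Prop := forall g x, f g x != 0 -> pdom pa g x.

Definition bis_char (v : K) (g : G) (W : X -> Prop) : G -> X -> K :=
  fun c y => if excluded_middle_informative (c = g /\ W y) then v else 0.

Lemma bis_charT v g W c y : c = g -> W y -> bis_char v g W c y = v.
Proof. by rewrite /bis_char => cg Wy; case: excluded_middle_informative => // -[]. Qed.

Lemma bis_charF v g W c y : ~ (c = g /\ W y) -> bis_char v g W c y = 0.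
Proof. by rewrite /bis_char => ncW; case: excluded_middle_informative. Qed.

Lemma bis_char_neq0 v g W c y : bis_char v g W c y != 0 -> c = g /\ W y.
Proof. by move=> nz; apply: NNPP => ncW; move: nz; rewrite bis_charF ?eqxx. Qed.

Lemma vanish_off_GX_eq0 (f : G -> X -> K) g x : vanish_off_GX f -> ~ pdom pa g x -> f g x = 0.
Proof. by move=> van ngx; apply/eqP; apply: NNPP => /negP /van. Qed.

Lemma supp_loc_const (f : G -> X -> K) : vanish_off_GX f -> loc_const pa f ->
  forall p, supp pa f p <-> f p.1 p.2 != 0.
Proof.
move=> van lcf p; split.
- move=> [GXp suppf]; apply/negP => /eqP fp0.
  have [W [oW [Wp fW]]] := lcf p GXp.
  have [q [Wq [GXq]]] := suppf W oW Wp.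
  by rewrite fW // fp0 eqxx.
- move=> nz; have GXp : GX pa p by case: p nz => c y; apply: van.
  by split => // W oW Wp; exists p.
Qed.

Hypothesis hclopen : forall g, clopen tX (pdom pa g).

Lemma closed_neq0 (f : G -> X -> K) : vanish_off_GX f -> loc_const pa f ->
  closed GXt (fun p => f p.1 p.2 != 0).
Proof.
move=> van lcf; apply: open_of_nbhd => -[c x] /= /negP /negPn /eqP fp0.
case: (classic (GX pa (c, x))) => GXp.
- have [W [oW [Wp fW]]] := lcf _ GXp; exists W; split => //; split => // -[d y] Wq.
  case: (classic (GX pa (d, y))) => [GXq|nGXq /van //].
  by rewrite /= (fW _ Wq GXq) /= fp0 eqxx.
- exists (fun p => ~ GX pa p); split; first exact: closed_GX.
  by split => // -[d y] nGXq /van.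
Qed.

Lemma steinberg_intro (f : G -> X -> K) (C : G * X -> Prop) : vanish_off_GX f ->
  loc_const pa f -> compact GXt C -> (forall p, f p.1 p.2 != 0 -> C p) -> steinberg pa f.
Proof.
move=> van lcf cC fC; do 2!split => //.
apply: compact_ext (fun p => iff_sym (supp_loc_const van lcf p)) _.
exact: compact_closed_subset cC fC (closed_neq0 van lcf).
Qed.

Lemma compact_neq0 (f : G -> X -> K) : steinberg pa f ->
  compact GXt (fun p => f p.1 p.2 != 0).
Proof. by move=> [van [lcf cf]]; apply: compact_ext (supp_loc_const van lcf) cf. Qed.

Lemma steinberg_grading_fin (f : G -> X -> K) : steinberg pa f ->
  exists s : list G, List.NoDup s /\ forall a y, f a y != 0 -> List.In a s.
Proof.
move=> /compact_neq0 cf.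
have [l hl] := cf G (fun a p => p.1 = a) (fun a => open_GX_fst _ (c := a))
  (fun p _ => ex_intro _ p.1 erefl).
exists (List.nodup (fun a b => excluded_middle_informative (a = b)) l).
split => [|a y /(hl (a, y)) [b [lb /= ab]]]; first exact: List.NoDup_nodup.
by apply/List.nodup_In; rewrite ab.
Qed.

Lemma conv_bis_charl v g W (h : G -> X -> K) c y : conv pa (bis_char v g W) h c y =
  bis_char v g W g y * h (gmul gs (ginv gs g) c) (pact pa (ginv gs g) y).
Proof. by rewrite /conv (fsum1 (a0 := g)) // => a ag; rewrite bis_charF ?mul0r // => -[]. Qed.

Lemma conv_bis_charr (f : G -> X -> K) v g W c x a0 : gmul gs (ginv gs a0) c = g ->
  conv pa f (bis_char v g W) c x = f a0 x * bis_char v g W g (pact pa (ginv gs a0) x).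
Proof.
move=> a0c; rewrite /conv (fsum1 (a0 := a0)) ?a0c // => a aa0.
by rewrite bis_charF ?mulr0 // => -[ac _]; apply: aa0 (gmulV_inj (etrans ac (esym a0c))).
Qed.

Lemma steinberg_bis_char v g (W : X -> Prop) : compact tX W -> open tX W -> closed tX W ->
  (forall y, W y -> pdom pa g y) -> steinberg pa (bis_char v g W).
Proof.
move=> cW oW clW Wg.
apply: (steinberg_intro (C := fun p => List.In p.1 [:: g] /\ W p.2)).
- move=> c y /bis_char_neq0 [-> /Wg] //.
- move=> [c y] _; exists (fun q => q.1 = c /\ (W q.2 <-> W y)); split.
    case: (classic (W y)) => Wy.
    + apply: open_ext (open_GX_slice (c := c) oW) => -[d z] /=.
      by split => -[-> Wz]; split; tauto.
    + apply: open_ext (open_GX_slice (c := c) clW) => -[d z] /=.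
      by split => -[-> Wz]; split; tauto.
  split => // -[d z] [/= -> Wzy] _; rewrite /bis_char.
  by do 2!case: excluded_middle_informative => //=; tauto.
- exact: (compact_GX_list (l := [:: g]) cW).
- by move=> [c y] /bis_char_neq0 [/= -> Wy]; split => //; left.
Qed.

Lemma steinberg0 : steinberg pa (fun _ _ => (0 : K)).
Proof.
apply: (steinberg_intro (C := fun _ => False)).
- by move=> g x; rewrite eqxx.
- by move=> p _; exists (fun _ => True); split; [apply: open_setT | split].
- exact: compact_empty.
- by move=> p; rewrite eqxx.
Qed.

Lemma steinberg_sub (f h : G -> X -> K) : steinberg pa f -> steinberg pa h ->
  steinberg pa (fun g x => f g x - h g x).
Proof.
move=> sf sh; have [vf [lf _]] := sf; have [vh [lh _]] := sh.
have fh_neq0 c y : f c y - h c y != 0 -> f c y != 0 \/ h c y != 0.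
  by case: (eqVneq (f c y) 0) => [->|]; [rewrite sub0r oppr_eq0; right | left].
apply: (steinberg_intro (C := fun p => f p.1 p.2 != 0 \/ h p.1 p.2 != 0)).
- by move=> g x /fh_neq0 [/vf|/vh].
- move=> p GXp; have [W1 [o1 [p1 fW1]]] := lf p GXp; have [W2 [o2 [p2 hW2]]] := lh p GXp.
  exists (fun q => W1 q /\ W2 q); split; first exact: open_I.
  by split => // q [q1 q2] GXq; rewrite fW1 ?hW2.
- exact: compact_or (compact_neq0 sf) (compact_neq0 sh).
- by move=> p /fh_neq0.
Qed.

Lemma steinberg_homogeneous (f h : G -> X -> K) g : steinberg pa f ->
  (forall c x, (c = g /\ h c x = f c x) \/ (c <> g /\ h c x = 0)) -> steinberg pa h.
Proof.
move=> sf hfg; have [vf [lf _]] := sf.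
have hf c x : h c x != 0 -> f c x != 0 by case: (hfg c x) => -[_ ->] //; rewrite eqxx.
apply: (steinberg_intro (C := fun p => f p.1 p.2 != 0)).
- by move=> c x /hf /vf.
- move=> [c x] GXp; have [W [oW [Wp fW]]] := lf _ GXp.
  exists (fun q => W q /\ q.1 = c); split; first exact: open_I oW (open_GX_fst _ (c := c)).
  split => // -[d y] [Wq /= dc] GXq; subst d.
  by case: (hfg c x) (hfg c y) => -[e ->] [] [e' ->] //; rewrite (fW (c, y)).
- exact: compact_neq0 sf.
- by move=> [c x] /hf.
Qed.

Lemma eq_bis_char v g (W W' : X -> Prop) : (forall y, W y <-> W' y) ->
  bis_char v g W = bis_char v g W'.
Proof.
move=> WW'; apply: functional_extensionality => c; apply: functional_extensionality => y.
by rewrite /bis_char; do 2!case: excluded_middle_informative => //=; firstorder.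
Qed.

Lemma conv_bis_char1l v (U : X -> Prop) (h : G -> X -> K) c y :
  conv pa (bis_char v (gone gs) U) h c y = bis_char v (gone gs) U (gone gs) y * h c y.
Proof. by rewrite conv_bis_charl ginv1 gmul1g pact_one. Qed.

Lemma conv_bis_char1_id (U : X -> Prop) (f : G -> X -> K) :
  (forall c y, f c y != 0 -> U y) -> conv pa (bis_char 1 (gone gs) U) f = f.
Proof.
move=> fU; apply: functional_extensionality => c; apply: functional_extensionality => y.
rewrite conv_bis_char1l; case: (eqVneq (f c y) 0) => [->|/fU Uy]; first by rewrite mulr0.
by rewrite bis_charT ?mul1r.
Qed.

Lemma loc_const_slice (f : G -> X -> K) c x : steinberg pa f ->
  exists N, open tX N /\ N x /\ forall y, N y -> f c y = f c x.
Proof.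
move=> [vf [lf _]]; case: (classic (pdom pa c x)) => cx; last first.
  exists (fun y => ~ pdom pa c y); split; first by case: (hclopen c).
  by split => // y ncy; rewrite !(vanish_off_GX_eq0 vf).
have [W [oW [Wcx fW]]] := lf (c, x) cx; have [N [oN [Nx NW]]] := open_GX_elim oW Wcx.
exists (fun y => N y /\ pdom pa c y); split; first by apply: open_I => //; case: (hclopen c).
by split => // y [Ny cy]; apply: (fW (c, y) (NW y Ny)).
Qed.

Definition conv_term (f h : G -> X -> K) c y a :=
  f a y * h (gmul gs (ginv gs a) c) (pact pa (ginv gs a) y).

Lemma conv_term_loc_const (f h : G -> X -> K) c x a : steinberg pa f -> steinberg pa h ->
  exists N, open tX N /\ N x /\ forall y, N y -> conv_term f h c y a = conv_term f h c x a.
Proof.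
move=> sf sh; rewrite /conv_term; case: (classic (pdom pa a x)) => ax; last first.
  exists (fun y => ~ pdom pa a y); split; first by case: (hclopen a).
  by split => // y nay; rewrite !(vanish_off_GX_eq0 (proj1 sf)) ?mul0r.
have [N1 [oN1 [N1x fN1]]] := loc_const_slice a x sf.
have [N2 [oN2 [N2x hN2]]] := loc_const_slice (gmul gs (ginv gs a) c) (pact pa (ginv gs a) x) sh.
have [N3 [oN3 N3N2]] := pact_inv_continuous pa a oN2.
exists (fun y => (N1 y /\ pdom pa a y) /\ N3 y); split.
  by apply: open_I => //; apply: open_I => //; case: (hclopen a).
split; first by split => //; apply/N3N2.
by move=> y [[N1y ay] /(N3N2 y ay) N2y]; rewrite fN1 // hN2.
Qed.

Lemma steinberg_conv (f h : G -> X -> K) : steinberg pa f -> steinberg pa h ->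
  steinberg pa (conv pa f h).
Proof.
move=> sf sh; have [vf _] := sf; have [vh _] := sh.
have [sf_ [ndf fsf]] := steinberg_grading_fin sf.
have [sh_ [_ hsh]] := steinberg_grading_fin sh.
have convE c y : conv pa f h c y = \sum_(a <- sf_) conv_term f h c y a.
  by apply: fsumE => // a /mulf_neq0_inv [/fsf].
have conv_neq0 c y : conv pa f h c y != 0 ->
    exists a, f a y != 0 /\ h (gmul gs (ginv gs a) c) (pact pa (ginv gs a) y) != 0.
  by move=> /fsum_neq0 [a /mulf_neq0_inv]; exists a.
apply: (steinberg_intro (C := fun p =>
  List.In p.1 (List.flat_map (fun a => List.map (gmul gs a) sh_) sf_) /\
  exists a, f a p.2 != 0)).
- by move=> c y /conv_neq0 [a [/vf ay /vh]]; apply: pdom_mulV.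
- move=> [c x] _.
  have [N [oN [Nx NT]]] := open_nbhd_list sf_ (fun a => conv_term_loc_const c x a sf sh).
  exists (fun q => q.1 = c /\ N q.2); split; first exact: open_GX_slice.
  by split => // -[d y] [/= -> Ny] _; rewrite !convE; apply: eq_big_In => a sa; apply: NT.
- have cF : compact tX (fun y => exists a, f a y != 0).
    by apply: compact_ext (compact_GX_snd (compact_neq0 sf)) => y; split => -[a]; exists a.
  exact: compact_GX_list cF.
- move=> [c y] /conv_neq0 [a [fa ha]]; split; last by exists a.
  apply/List.in_flat_map; exists a; split; first exact: fsf fa.
  apply/List.in_map_iff; exists (gmul gs (ginv gs a) c); split; first by rewrite gmulVK.
  exact: hsh ha.
Qed.

End SteinbergAlgebra.

Section GradedIdeals.
Variables (G : Type) (gs : group_str G) (X : Type) (tX : topology X)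
  (pa : partial_action gs tX) (K : fieldType).
Hypotheses (hH : hausdorff tX) (hLC : locally_compact tX) (hTD : totally_disconnected tX).
Hypothesis hclopen : forall g, clopen tX (pdom pa g).

Lemma graded_ideal_steinberg_on (V : X -> Prop) : pa_invariant pa V ->
  graded_ideal pa (steinberg_on pa (K := K) V).
Proof.
move=> iV; split; [split; [|split; [|split]] |].
- by move=> f [].
- by split; [exact: steinberg0 | move=> g x; rewrite eqxx].
- move=> f h [sf fV] [sh hV]; split; first exact: steinberg_sub.
  move=> g x; case: (eqVneq (f g x) 0) => [-> | /fV //].
  by rewrite sub0r oppr_eq0 => /hV.
- move=> f h sf [sh hV]; do 2!split; try exact: steinberg_conv.
  + move=> c x /fsum_neq0 [a /mulf_neq0_inv [fa /hV Vy]].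
    have [_] := iV (ginv gs a) _ (pdom_pact_inv (proj1 sf _ _ fa)) Vy.
    by rewrite ginvK pact_invK //; apply: (proj1 sf).
  + by move=> c x /fsum_neq0 [a /mulf_neq0_inv [/hV]].
- move=> f g h [sf fV] hfg; split; first exact: steinberg_homogeneous sf hfg.
  by move=> c x; case: (hfg c x) => -[_ ->] //; [apply: fV | rewrite eqxx].
Qed.

Lemma bis_char_nbhd g (O : X -> Prop) x : open tX O -> O x ->
  (forall y, O y -> pdom pa g y) ->
  exists U, open tX U /\ U x /\ (forall y, U y -> O y) /\
    forall v : K, steinberg pa (bis_char v g U).
Proof.
move=> oO Ox Og; have [U [cU [oU [clU [Ux UO]]]]] := compact_clopen_nbhd hH hLC hTD oO Ox.
exists U; do 3!split => //; move=> v.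
by apply: steinberg_bis_char => // y /UO /Og.
Qed.

Lemma steinberg_on_subset (V W : X -> Prop) : open tX V ->
  (forall f, steinberg_on pa (K := K) V f -> steinberg_on pa W f) -> forall x, V x -> W x.
Proof.
move=> oV VW x Vx.
have [U [oU [Ux [UV sU]]]] := bis_char_nbhd oV Vx (fun y _ => pdom_one pa y).
have [_ UW] := VW _ (conj (sU 1) (fun c y nz => UV y (proj2 (bis_char_neq0 nz)))).
by apply: (UW (gone gs)); rewrite bis_charT // oner_neq0.
Qed.

Section IdealSupport.
Variable I : (G -> X -> K) -> Prop.
Hypothesis hI : graded_ideal pa I.

Definition ideal_support (x : X) : Prop := exists f c, I f /\ f c x != 0.

Lemma ideal_steinberg f : I f -> steinberg pa f.
Proof. exact: hI.1.1. Qed.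

Lemma ideal_convl f h : steinberg pa f -> I h -> I (conv pa f h).
Proof. by move=> sf Ih; case: (hI.1.2.2.2 f h sf Ih). Qed.

Lemma ideal_convr f h : steinberg pa f -> I h -> I (conv pa h f).
Proof. by move=> sf Ih; case: (hI.1.2.2.2 f h sf Ih). Qed.

Lemma ideal_add f h : I f -> I h -> I (fun g x => f g x + h g x).
Proof.
have [[_ [I0 [Isub _]]] _] := hI; move=> If Ih.
have := Isub _ _ If (Isub _ _ I0 Ih); congr I.
apply: functional_extensionality => g; apply: functional_extensionality => x.
by rewrite sub0r opprK.
Qed.

Lemma ideal_unit_component f c x : I f -> f c x != 0 ->
  exists e, I e /\ e (gone gs) x = f c x /\ forall d y, d <> gone gs -> e d y = 0.
Proof.
move=> If fcx; have cx := (ideal_steinberg If).1 _ _ fcx.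
have [W [oW [Wx [Wc sW]]]] :=
  bis_char_nbhd (pdom_open pa (ginv gs c)) (pdom_pact_inv cx) (fun y cy => cy).
pose h := conv pa f (bis_char 1 (ginv gs c) W).
have hx : h (gone gs) x = f c x.
  by rewrite /h (conv_bis_charr _ _ _ _ _ (gmulg1 gs (ginv gs c))) bis_charT // mulr1.
pose e d y := if excluded_middle_informative (d = gone gs) then h d y else 0.
exists e; split.
  apply: (hI.2 h (gone gs) e (ideal_convr (sW 1) If)) => d y; rewrite /e.
  by case: excluded_middle_informative => dg; [left | right].
by rewrite /e; split => [|d y]; case: excluded_middle_informative.
Qed.

Lemma ideal_support_bis_char x : ideal_support x ->
  exists U, open tX U /\ U x /\ I (bis_char 1 (gone gs) U).
Proof.
move=> [f [c [If fcx]]]; have [e [Ie [ex e0]]] := ideal_unit_component If fcx.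
have [N [oN [Nx Ne]]] := loc_const_slice hclopen (gone gs) x (ideal_steinberg Ie).
have [U [oU [Ux [UN sU]]]] := bis_char_nbhd oN Nx (fun y _ => pdom_one pa y).
exists U; do 2!split => //.
suff -> : bis_char 1 (gone gs) U = conv pa (bis_char (e (gone gs) x)^-1 (gone gs) U) e.
  exact: ideal_convl.
apply: functional_extensionality => d; apply: functional_extensionality => y.
rewrite conv_bis_char1l; case: (classic (U y)) => Uy.
2: by rewrite !bis_charF ?mul0r // => -[].
case: (classic (d = gone gs)) => [->|dg]; last by rewrite (e0 d y dg) mulr0 bis_charF // => -[].
by rewrite !bis_charT // (Ne y (UN y Uy)) mulVf // ex.
Qed.

Lemma ideal_bis_char_or (A B : X -> Prop) : I (bis_char 1 (gone gs) A) ->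
  I (bis_char 1 (gone gs) B) -> I (bis_char 1 (gone gs) (fun y => A y \/ B y)).
Proof.
move=> IA IB; have [[_ [_ [Isub _]]] _] := hI.
have := Isub _ _ (ideal_add IA IB) (ideal_convl (ideal_steinberg IA) IB); congr I.
apply: functional_extensionality => d; apply: functional_extensionality => y.
rewrite conv_bis_char1l; case: (classic (d = gone gs)) => [->|dg]; last first.
  have bis0 W : bis_char (1 : K) (gone gs) W d y = 0 by apply: bis_charF => -[].
  by rewrite !bis0 mulr0 addr0 subr0.
case: (classic (A y)) => [Ay|nAy].
  rewrite (bis_charT 1 erefl Ay) mul1r addrK.
  by rewrite (bis_charT 1 (W := fun z => A z \/ B z) erefl (or_introl Ay)).
rewrite (bis_charF 1 (fun H => nAy H.2)) mul0r subr0 add0r.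
case: (classic (B y)) => [By|nBy]; first by rewrite !bis_charT //; right.
by rewrite !bis_charF //; tauto.
Qed.

Lemma ideal_bis_char_listU (l : list (X -> Prop)) :
  (forall U, List.In U l -> I (bis_char 1 (gone gs) U)) ->
  I (bis_char 1 (gone gs) (fun y => exists U, List.In U l /\ U y)).
Proof.
elim: l => [|A l IH] Il.
  suff -> : bis_char 1 (gone gs) (fun y => exists U, List.In U [::] /\ U y) =
    fun (_ : G) (_ : X) => (0 : K).
    exact: hI.1.2.1.
  apply: functional_extensionality => d; apply: functional_extensionality => y.
  by rewrite bis_charF // => -[_ [U [[] _]]].
rewrite (eq_bis_char _ _ (W' := fun y => A y \/ exists U, List.In U l /\ U y)).
  by apply: ideal_bis_char_or; [apply: Il; left | apply: IH => U lU; apply: Il; right].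
move=> y; split => [[U [[<-|lU] Uy]]|[Ay|[U [lU Uy]]]]; first by left.
- by right; exists U.
- by exists A; split => //; left.
- by exists U; split => //; right.
Qed.

Lemma open_ideal_support : open tX ideal_support.
Proof.
apply: open_of_nbhd => x [f [c [If fcx]]].
have [N [oN [Nx Nf]]] := loc_const_slice hclopen c x (ideal_steinberg If).
by exists N; split => //; split => // y Ny; exists f, c; rewrite Nf.
Qed.

Lemma pa_invariant_ideal_support : pa_invariant pa ideal_support.
Proof.
move=> g x gx [f [c [If fcx]]]; split; first exact: pdom_pact_inv.
have [W [oW [Wx [Wg sW]]]] :=
  bis_char_nbhd (pdom_open pa (ginv gs g)) (pdom_pact_inv gx) (fun y gy => gy).
exists (conv pa (bis_char 1 (ginv gs g) W) f), (gmul gs (ginv gs g) c).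
split; first exact: ideal_convl.
by rewrite conv_bis_charl ginvK gmulVK pact_invK // bis_charT // mul1r.
Qed.

Lemma ideal_eq_steinberg_on f : I f <-> steinberg_on pa ideal_support f.
Proof.
split=> [If | [sf fV]]; first by split => [|c x fcx]; [exact: ideal_steinberg | exists f, c].
pose J := {U : X -> Prop | open tX U /\ I (bis_char 1 (gone gs) U)}.
have cf := compact_neq0 sf.
have [|s hs] := cf J (fun i p => sval i p.2) (fun i => open_GX_snd (proj2_sig i).1).
  move=> [c y] /fV /ideal_support_bis_char [U [oU [Uy IU]]].
  by exists (exist _ U (conj oU IU)).
have fU c y : f c y != 0 -> exists U, List.In U (List.map sval s) /\ U y.
  move=> /(hs (c, y)) [i [si Uy]]; exists (sval i); split => //.
  by apply/List.in_map_iff; exists i.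
rewrite -(conv_bis_char1_id pa fU).
apply: ideal_convr sf (ideal_bis_char_listU _) => U /List.in_map_iff [i [<- _]].
by case: (proj2_sig i).
Qed.

End IdealSupport.

End GradedIdeals.

Theorem mainTheorem11 (X : Type) (tX : topology X)
  (hH : hausdorff tX) (hLC : locally_compact tX) (hTD : totally_disconnected tX)
  (G : Type) (gs : group_str G) (K : fieldType) (pa : partial_action gs tX)
  (hclopen : forall g, clopen tX (pdom pa g)) :
  (forall V, open tX V -> pa_invariant pa V ->
     graded_ideal pa (@steinberg_on _ _ _ _ pa K V)) /\
  (forall V W, open tX V -> pa_invariant pa V -> open tX W -> pa_invariant pa W ->
     (forall f : G -> X -> K, steinberg_on pa V f <-> steinberg_on pa W f) ->
     forall x, V x <-> W x) /\
  (forall I : (G -> X -> K) -> Prop, graded_ideal pa I ->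
     exists V, open tX V /\ pa_invariant pa V /\
       forall f, I f <-> steinberg_on pa V f).
Proof.
split; first by move=> V _; apply: graded_ideal_steinberg_on.
split.
  move=> V W oV _ oW _ VW x.
  by split; apply: (steinberg_on_subset hH hLC hTD) => // f /VW.
move=> I hI; exists (ideal_support I); split; first exact: open_ideal_support.
split; first exact: pa_invariant_ideal_support.
exact: ideal_eq_steinberg_on.
Qed.
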